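(* For every $\epsilon>0$ there is an instance with uniform weights on which $$\mathrm{opt}_M\text{-}\mathrm{MAX}=\mathrm{opt}_M\text{-}\mathrm{SUM}\ \ge\ (2-\epsilon)\,\mathrm{opt}\text{-}\mathrm{MAX}=(2-\epsilon)\,\mathrm{opt}\text{-}\mathrm{SUM}.$$
   Context: An instance consists of a finite set $E$ of $n$ elements and $m$ tests, test $i$ being a subset $s_i\subseteq E$, with element weights $p_e$; uniform weights mean $p_e=1/n$ for SUM objectives and $p_e=1$ for MAX objectives. A schedule is an infinite test sequence; stochastic schedules choose $\sigma_t$ randomly depending on the past; memoryless schedules draw each $\sigma_t$ i.i.d. from a distribution $q$ on tests. Detection time $T(e,t)=\mathbb{E}[1+\min\{h\ge0:e\in s_{\sigma_{t+h}}\}]$, $E_t[e]=\lim_H\frac1H\sum_{t\le H}T(e,t)$; valid schedules have $\sup_tT(e,t)<\infty$, $E_t[e]$ existing for all $e$, and convergent test frequencies. $\mathrm{opt}\text{-}\mathrm{SUM}$, $\mathrm{opt}\text{-}\mathrm{MAX}$: infima over valid stochastic schedules of $\sum_ep_eE_t[e]$ and $\max_ep_eE_t[e]$ respectively; $\mathrm{opt}_M\text{-}\mathrm{SUM}$, $\mathrm{opt}_M\text{-}\mathrm{MAX}$: the same infima over memoryless schedules. *)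

From HB Require Import structures.
From mathcomp Require Import all_boot all_order all_algebra.
From mathcomp Require Import all_classical all_reals all_analysis.
Set Implicit Arguments. Unset Strict Implicit. Unset Printing Implicit Defensive.
Import Order.TTheory GRing.Theory Num.Theory numFieldNormedType.Exports.
Local Open Scope ring_scope.
Local Open Scope classical_set_scope.

Section Sched.
Variable R : realType.
Variables (n m : nat) (s : 'I_m -> {set 'I_n}).

(* A stochastic schedule: given the past (the finite history of tests
   chosen so far), a probability distribution for the next test. *)
Definition schedule := seq 'I_m -> 'I_m -> R.

Definition is_stochastic (sc : schedule) : Prop :=
  (forall h j, 0 <= sc h j) /\ (forall h, \sum_(j : 'I_m) sc h j = 1).

Definition memoryless (sc : schedule) : Prop :=
  exists q : 'I_m -> R, forall h, sc h = q.

Fixpoint pr_from (sc : schedule) (h : seq 'I_m) (w : seq 'I_m) : R :=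
  match w with
  | [::] => 1
  | j :: w' => sc h j * pr_from sc (rcons h j) w'
  end.
Definition pr (sc : schedule) (w : seq 'I_m) : R := pr_from sc [::] w.

(* probability that, from time t on, e is first detected at time t + k
   (i.e. min{h >= 0 : e \in s (sigma_(t+h))} = k); times are 0-based *)
Definition P_first (sc : schedule) (e : 'I_n) (t k : nat) : R :=
  \sum_(w : (t + k).+1.-tuple 'I_m |
        [forall i : 'I_(t + k).+1, ((t <= i < t + k)%N) ==> (e \notin s (tnth w i))]
        && (e \in s (tnth w ord_max)))
    pr sc w.

(* detection time T(e,t) = E[1 + min{h >= 0 : e \in s (sigma_(t+h))}],
   which is +oo if with positive probability e is never detected *)
Definition T_det (sc : schedule) (e : 'I_n) (t : nat) : \bar R :=
  if ((\sum_(k <oo) (P_first sc e t k)%:E)%E == 1%E)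
  then (\sum_(k <oo) ((k.+1)%:R * P_first sc e t k)%:E)%E
  else +oo%E.

Definition P_test (sc : schedule) (i : 'I_m) (t : nat) : R :=
  \sum_(w : t.+1.-tuple 'I_m | tnth w ord_max == i) pr sc w.

Definition cesaro (u : nat -> R) (H : nat) : R :=
  (\sum_(t < H.+1) u t) / H.+1%:R.

Definition Treal (sc : schedule) (e : 'I_n) (t : nat) : R := fine (T_det sc e t).

Definition valid (sc : schedule) : Prop :=
  [/\ is_stochastic sc,
      (exists B : R, forall e t, (T_det sc e t <= B%:E)%E),
      (forall e, cvgn (cesaro (Treal sc e))) &
      (forall i, cvgn (cesaro (P_test sc i)))].

Definition Et (sc : schedule) (e : 'I_n) : R := limn (cesaro (Treal sc e)).

(* uniform weights: p_e = 1/n for SUM, p_e = 1 for MAX *)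
Definition obj_SUM (sc : schedule) : R := \sum_(e : 'I_n) n%:R^-1 * Et sc e.
Definition obj_MAX (sc : schedule) : R := \big[Num.max/0]_(e : 'I_n) Et sc e.

Definition opt_SUM : \bar R :=
  ereal_inf [set (obj_SUM sc)%:E | sc in [set sc | valid sc]].
Definition opt_MAX : \bar R :=
  ereal_inf [set (obj_MAX sc)%:E | sc in [set sc | valid sc]].
Definition optM_SUM : \bar R :=
  ereal_inf [set (obj_SUM sc)%:E | sc in [set sc | valid sc /\ memoryless sc]].
Definition optM_MAX : \bar R :=
  ereal_inf [set (obj_MAX sc)%:E | sc in [set sc | valid sc /\ memoryless sc]].

End Sched.

From Pilot Require Import Defs.
From HB Require Import structures.
From mathcomp Require Import all_boot all_order all_algebra.
From mathcomp Require Import all_classical all_reals all_analysis.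
From mathcomp Require Import ring lra zify.
Import Order.TTheory GRing.Theory Num.Theory numFieldNormedType.Exports.
Set Implicit Arguments. Unset Strict Implicit.
Local Open Scope ring_scope.

(** The instance has n elements and the n singleton tests.  Since a test
  detects a single element, at most one element is first detected at any
  given step, so for every t the survival probabilities summed over all
  elements give [sum_e T(e,t) >= 1 + 2 + ... + n]; hence both objectives
  are at least (n+1)/2, and round robin started at a uniformly random test
  attains (n+1)/2 for every element.  A memoryless schedule with test
  distribution q detects e after a geometric time of mean 1/q_e, and
  [sum_e 1/q_e >= n^2] when [sum_e q_e = 1], with equality for the uniform
  q; so both memoryless optima equal n.  The ratio 2n/(n+1) tends to 2. *)

Lemma sum_tuple_nil (V : nmodType) (T : finType) (F : 0.-tuple T -> V) :
  \sum_(w : 0.-tuple T) F w = F [tuple].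
Proof.
rewrite (big_pred1 [tuple]) // => w /=; rewrite [w]tuple0; exact/esym/eqP.
Qed.

Lemma sum_tuple_cons (V : nmodType) (T : finType) k (F : k.+1.-tuple T -> V) :
  \sum_(w : k.+1.-tuple T) F w =
  \sum_(j : T) \sum_(w : k.-tuple T) F [tuple of j :: w].
Proof.
rewrite pair_big /=.
rewrite (reindex (fun p : T * k.-tuple T => [tuple of p.1 :: p.2])) //=.
exists (fun w : k.+1.-tuple T => (thead w, [tuple of behead w])).
  by move=> [j w] _ /=; congr pair; apply: val_inj.
by move=> w _; apply: val_inj => /=; case: w => [[|x w] //=].
Qed.

Lemma sum_tuple_prod (R : comPzSemiRingType) (T : finType) k
    (f : nat -> T -> R) :
  \sum_(w : k.-tuple T) \prod_(i < k) f i (tnth w i)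
  = \prod_(i < k) \sum_(j : T) f i j.
Proof.
elim: k f => [|k IH] f; first by rewrite sum_tuple_nil !big_ord0.
rewrite sum_tuple_cons big_ord_recl /= big_distrl /=; apply: eq_bigr => j _.
rewrite -(IH (fun i => f i.+1)) big_distrr /=; apply: eq_bigr => w _.
by rewrite big_ord_recl /=; congr (_ * _); apply: eq_bigr => i _; rewrite tnthS.
Qed.

Lemma prod_natb (R : pzSemiRingType) (I : finType) (b : I -> bool) :
  \prod_i ((nat_of_bool (b i))%:R : R) = (nat_of_bool [forall i, b i])%:R.
Proof.
rewrite (_ : [forall i, b i] = \big[andb/true]_i b i); last exact/esym/big_andE.
apply: (big_rec2 (fun (x : R) (y : bool) => x = (nat_of_bool y)%:R)) => // i x y _ ->.
by rewrite -natrM mulnb.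
Qed.

Lemma sum_mulr_natb (R : pzSemiRingType) (I : finType) (F : I -> R) (b : pred I) :
  \sum_(i | b i) F i = \sum_i F i * (nat_of_bool (b i))%:R.
Proof. by rewrite big_mkcond; apply: eq_bigr => i _; case: (b i); rewrite ?mulr1 ?mulr0. Qed.

Lemma cesaro_cst (R : realType) (u : nat -> R) c :
  (forall t, u t = c) -> Defs.cesaro u = fun=> c.
Proof.
move=> uc; apply/funext => H; rewrite /Defs.cesaro.
rewrite (eq_bigr (fun _ => c)) // sumr_const card_ord -[c *+ _]mulr_natr.
by rewrite mulfK // pnatr_eq0.
Qed.

Section MeanFromSurvival.
Variable R : realType.
Implicit Types P : nat -> R.

(* [1 - \sum_(j < i) P j] is the probability that a variable of law P is at
  least i, and [\sum_k (k+1) P k] is its mean plus one. *)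
Definition survival_sum P K : R := \sum_(i < K) (1 - \sum_(j < i) P j).

Lemma mean_partial_sum P K : \sum_(k < K) (k.+1)%:R * P k =
  survival_sum P K - K%:R * (1 - \sum_(j < K) P j).
Proof.
rewrite /survival_sum; elim: K => [|K IH]; first by rewrite !big_ord0 mul0r subr0.
rewrite !big_ord_recr /= IH.
set A := \sum_(i < K) _; set B := \sum_(i < K) _.
rewrite -[K.+1]addn1 !natrD; lra.
Qed.

Variable P : nat -> R.
Hypothesis P_ge0 : forall k, 0 <= P k.
Hypothesis P_sum1 : (\sum_(k <oo) (P k)%:E = 1)%E.

Lemma nneseries_tail K :
  (\sum_(K <= k <oo) (P k)%:E = (1 - \sum_(j < K) P j)%:E)%E.
Proof.
move: P_sum1; rewrite (@nneseries_split _ _ 0 K); last by move=> k _; rewrite lee_fin.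
rewrite add0n sumEFin big_mkord => h.
by rewrite EFinB -h [((_)%:E + _)%E]addeC addeK.
Qed.

Lemma partial_sum_le1 K : \sum_(j < K) P j <= 1.
Proof.
rewrite -lee_fin -P_sum1 -sumEFin -(big_mkord xpredT (fun j => (P j)%:E)).
by apply: (@nneseries_lim_ge _ _ xpredT 0 K) => k _ _; rewrite lee_fin.
Qed.

Lemma survival_sum_le_mean K :
  ((survival_sum P K)%:E <= \sum_(k <oo) ((k.+1)%:R * P k)%:E)%E.
Proof.
rewrite (@nneseries_split _ _ 0 K); last by move=> k _; rewrite lee_fin mulr_ge0.
rewrite add0n sumEFin big_mkord mean_partial_sum.
set A := survival_sum P K; set F := 1 - _.
rewrite -[in X in (X <= _)%E](subrK (K%:R * F) A) EFinD EFinM; apply: leeD2l.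
rewrite -nneseries_tail -nneseriesZl; last by move=> i _; rewrite lee_fin.
rewrite eseries_cond [in X in (_ <= X)%E]eseries_cond; apply: lee_nneseries.
  by move=> i _ _; rewrite -EFinM lee_fin mulr_ge0.
move=> i /= Ki; rewrite -EFinM lee_fin ler_wpM2r // ler_nat.
exact: leqW.
Qed.

Lemma mean_le_survival_bound (c : R) : (forall K, survival_sum P K <= c) ->
  (\sum_(k <oo) ((k.+1)%:R * P k)%:E <= c%:E)%E.
Proof.
move=> Hc.
apply: lime_le; first by apply: is_cvg_nneseries => k _ _; rewrite lee_fin mulr_ge0.
apply: nearW => K /=; rewrite sumEFin big_mkord lee_fin mean_partial_sum.
apply: le_trans (Hc K); rewrite gerBl mulr_ge0 // subr_ge0.
exact: partial_sum_le1.
Qed.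

End MeanFromSurvival.

Lemma nneseries_eventually0 (R : realType) (f : nat -> R) M :
  (forall k, 0 <= f k) -> (forall k, (M <= k)%N -> f k = 0) ->
  (\sum_(k <oo) (f k)%:E = (\sum_(k < M) f k)%:E)%E.
Proof.
move=> f0 fM; rewrite (@nneseries_split _ _ 0 M); last by move=> k _; rewrite lee_fin.
by rewrite add0n eseries0 ?adde0 ?sumEFin ?big_mkord // => k Mk _; rewrite fM.
Qed.

Section Geometric.
Variables (R : realType) (z : R).
Hypothesis z01 : 0 <= z < 1.

Lemma survival_sum_geometric K :
  survival_sum (fun j => (1 - z) * z ^+ j) K = \sum_(i < K) z ^+ i.
Proof.
apply: eq_bigr => i _; elim: (nat_of_ord i) => [|a IH].
  by rewrite big_ord0 subr0 expr0.
by rewrite big_ord_recr /= opprD addrA IH exprS; lra.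
Qed.

Lemma survival_sum_geometric_le K :
  survival_sum (fun j => (1 - z) * z ^+ j) K <= (1 - z)^-1.
Proof.
case/andP: z01 => z0 z1; rewrite survival_sum_geometric.
have -> : \sum_(i < K) z ^+ i = (1 - z ^+ K) / (1 - z).
  have := congr1 (fun f => f K) (@geometric_seriesE R 1 z (negbT (lt_eqF z1))).
  rewrite /= /series /geometric /= mul1r => <-.
  by rewrite big_mkord; apply: eq_bigr => i _; rewrite mul1r.
rewrite ler_pdivrMr ?subr_gt0 // mulVf ?subr_eq0 ?gt_eqF //.
by rewrite gerBl exprn_ge0.
Qed.

Lemma survival_sum_geometric_cvg :
  (survival_sum (fun j => (1 - z) * z ^+ j) @ \oo --> (1 - z)^-1)%classic.
Proof.
case/andP: z01 => z0 z1.
have := @cvg_geometric_series R 1 z; rewrite ger0_norm // mul1r => /(_ z1).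
apply: cvg_trans; apply: near_eq_cvg; apply: nearW => K /=.
rewrite survival_sum_geometric /series /geometric /= big_mkord.
by apply: eq_bigr => i _; rewrite mul1r.
Qed.

Lemma geometric_law_sum1 :
  (\sum_(k <oo) ((1 - z) * z ^+ k)%:E = 1)%E.
Proof.
case/andP: z01 => z0 z1.
rewrite (_ : (fun _ => _) = EFin \o series (geometric (1 - z) z)); last first.
  by apply/funext => K /=; rewrite sumEFin.
have hz : `|z| < 1 by rewrite ger0_norm.
rewrite EFin_lim; last exact: is_cvg_geometric_series.
by rewrite (cvg_lim _ (@cvg_geometric_series R _ _ hz)) // divff // subr_eq0 gt_eqF.
Qed.

End Geometric.

Section Schedules.
Variables (R : realType) (n m : nat) (s : 'I_m -> {set 'I_n}).
Local Notation schedule := (schedule R m).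
Implicit Types (sc : schedule) (e : 'I_n).

Section Stochastic.
Variable sc : schedule.
Hypothesis sc_stoch : is_stochastic sc.

Lemma pr_from_ge0 h w : 0 <= pr_from sc h w.
Proof.
case: sc_stoch => H0 _; elim: w h => [|j w IH] h //=.
by rewrite mulr_ge0.
Qed.

Lemma sum_pr_from k h : \sum_(w : k.-tuple 'I_m) pr_from sc h w = 1.
Proof.
case: sc_stoch => _ H1; elim: k h => [|k IH] h; first by rewrite sum_tuple_nil.
rewrite sum_tuple_cons -(H1 h); apply: eq_bigr => j _ /=.
by rewrite -big_distrr /= IH mulr1.
Qed.

Lemma P_first_ge0 e t k : 0 <= P_first s sc e t k.
Proof. by apply: sumr_ge0 => w _; exact: pr_from_ge0. Qed.

Lemma T_det_bounded e t B : (T_det s sc e t <= B%:E)%E ->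
  (\sum_(k <oo) (P_first s sc e t k)%:E = 1)%E /\
  T_det s sc e t = (\sum_(k <oo) ((k.+1)%:R * P_first s sc e t k)%:E)%E.
Proof. by rewrite /T_det; case: ifP => [/eqP -> //|_]; rewrite leye_eq. Qed.

Lemma Treal_bounded e t B : (T_det s sc e t <= B%:E)%E ->
  (Treal s sc e t)%:E = T_det s sc e t.
Proof.
move=> HB; have [_ HT] := T_det_bounded HB.
rewrite /Treal fineK // ge0_fin_numE; first exact: le_lt_trans HB (ltry _).
by rewrite HT; apply: nneseries_ge0 => k _ _; rewrite lee_fin mulr_ge0 ?P_first_ge0.
Qed.

Lemma survival_sum_le_Treal e t B : (T_det s sc e t <= B%:E)%E ->
  forall K, survival_sum (P_first s sc e t) K <= Treal s sc e t.
Proof.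
move=> HB K; rewrite -lee_fin (Treal_bounded HB).
have [P_sum1 ->] := T_det_bounded HB.
by apply: survival_sum_le_mean => // k; exact: P_first_ge0.
Qed.

End Stochastic.

Lemma valid_stationary sc (T : 'I_n -> R) (f : 'I_m -> R) : is_stochastic sc ->
  (forall e t, T_det s sc e t = (T e)%:E) -> (forall i t, P_test sc i t = f i) ->
  valid s sc.
Proof.
move=> Hs HT Hf; split => //.
- by exists (\big[Num.max/0]_e T e) => e t; rewrite HT lee_fin le_bigmax.
- move=> e; rewrite (@cesaro_cst _ _ (T e)); first exact: is_cvg_cst.
  by move=> t; rewrite /Treal HT.
- move=> i; rewrite (@cesaro_cst _ _ (f i)); first exact: is_cvg_cst.
  by move=> t; rewrite Hf.
Qed.

Lemma Et_stationary sc (T : 'I_n -> R) :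
  (forall e t, T_det s sc e t = (T e)%:E) -> forall e, Et s sc e = T e.
Proof.
move=> HT e; rewrite /Et (@cesaro_cst _ _ (T e)) ?lim_cst // => t.
by rewrite /Treal HT.
Qed.

Hypothesis n_gt0 : (0 < n)%N.

Lemma obj_SUM_le_MAX sc : obj_SUM s sc <= obj_MAX s sc.
Proof.
rewrite /obj_SUM.
apply: (@le_trans _ _ (\sum_(e : 'I_n) n%:R^-1 * obj_MAX s sc)).
  by apply: ler_sum => e _; rewrite ler_wpM2l ?invr_ge0 ?le_bigmax.
rewrite sumr_const card_ord -[_ *+ n]mulr_natr mulrC mulrA mulfV ?pnatr_eq0 -?lt0n //.
by rewrite mul1r.
Qed.

Local Open Scope classical_set_scope.

(* Since SUM <= MAX pointwise, a common lower bound for SUM that some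
  admissible schedule attains for MAX is the value of both infima. *)
Lemma ereal_inf_objs (S : set schedule) (c : R) sc0 :
  S sc0 -> obj_MAX s sc0 <= c -> (forall sc, S sc -> c <= obj_SUM s sc) ->
  ereal_inf [set (obj_SUM s sc)%:E | sc in S] = c%:E /\
  ereal_inf [set (obj_MAX s sc)%:E | sc in S] = c%:E.
Proof.
move=> S0 hMAX hSUM; split; apply/eqP; rewrite eq_le; apply/andP; split.
- apply: ge_ereal_inf; exists (obj_SUM s sc0)%:E; first by exists sc0.
  by rewrite lee_fin (le_trans (obj_SUM_le_MAX sc0)).
- by apply: le_ereal_inf_tmp => _ [sc Ssc <-]; rewrite lee_fin hSUM.
- by apply: ge_ereal_inf; exists (obj_MAX s sc0)%:E; first by exists sc0.
- apply: le_ereal_inf_tmp => _ [sc Ssc <-]; rewrite lee_fin.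
  exact: le_trans (hSUM _ Ssc) (obj_SUM_le_MAX sc).
Qed.

End Schedules.

Section Memoryless.
Variables (R : realType) (n m : nat) (s : 'I_m -> {set 'I_n}).
Variables (q : 'I_m -> R) (sc : schedule R m).
Hypothesis sc_q : forall h, sc h = q.
Hypothesis sc_stoch : is_stochastic sc.
Implicit Types (e : 'I_n) (t k : nat).

Lemma memoryless_ge0 j : 0 <= q j.
Proof. by case: sc_stoch => H _; rewrite -(sc_q [::]) H. Qed.

Lemma memoryless_sum1 : \sum_(j : 'I_m) q j = 1.
Proof. by case: sc_stoch => _ H; rewrite -(H [::]) (sc_q [::]). Qed.

Lemma pr_from_memoryless h w : pr_from sc h w = \prod_(j <- w) q j.
Proof.
by elim: w h => [|j w IH] h /=; rewrite ?big_nil // big_cons IH sc_q.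
Qed.

Lemma sum_pr_memoryless k (c : nat -> pred 'I_m) :
  \sum_(w : k.-tuple 'I_m | [forall i : 'I_k, c i (tnth w i)]) pr sc w
  = \prod_(i < k) \sum_(j | c i j) q j.
Proof.
under [RHS]eq_bigr do rewrite sum_mulr_natb.
rewrite -(@sum_tuple_prod _ _ k (fun i j => q j * (nat_of_bool (c i j))%:R)).
rewrite big_mkcond; apply: eq_bigr => w _.
rewrite big_split /= prod_natb /pr pr_from_memoryless big_tuple.
by case: ifP; rewrite ?mulr1 ?mulr0.
Qed.

Lemma P_test_memoryless i t : P_test sc i t = q i.
Proof.
pose c j x := (j == t)%N ==> (x == i).
rewrite /P_test (eq_bigl (fun w : t.+1.-tuple 'I_m =>
  [forall j : 'I_t.+1, c j (tnth w j)])); last first.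
  move=> w; rewrite /c; apply/idP/idP => [/eqP <-|/forallP/(_ ord_max)/implyP]; last exact.
  apply/forallP => j; apply/implyP => /eqP hj.
  by rewrite (_ : j = ord_max) //; exact: val_inj.
rewrite sum_pr_memoryless big_ord_recr /= big1 ?mul1r; first by rewrite /c eqxx (big_pred1 i).
by move=> j _; rewrite /c (ltn_eqF (ltn_ord j)) -memoryless_sum1; apply: eq_bigl.
Qed.

Definition detect_prob e : R := \sum_(j | e \in s j) q j.

Lemma detect_prob_ge0 e : 0 <= detect_prob e.
Proof. by apply: sumr_ge0 => j _; exact: memoryless_ge0. Qed.

Lemma detect_prob_le1 e : detect_prob e <= 1.
Proof.
rewrite -memoryless_sum1 [X in _ <= X](bigID (fun j => e \in s j)) /= lerDl.
by apply: sumr_ge0 => j _; exact: memoryless_ge0.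
Qed.

Lemma miss_prob e : \sum_(j | e \notin s j) q j = 1 - detect_prob e.
Proof.
by rewrite /detect_prob -memoryless_sum1 [in RHS](bigID (fun j => e \in s j)) /= addrC addrK.
Qed.

Lemma P_first_memoryless e t k :
  P_first s sc e t k = detect_prob e * (1 - detect_prob e) ^+ k.
Proof.
pose c i j := if (i < t)%N then true
              else if (i < t + k)%N then e \notin s j else e \in s j.
rewrite /P_first (eq_bigl (fun w : (t + k).+1.-tuple 'I_m =>
  [forall i : 'I_(t + k).+1, c i (tnth w i)])); last first.
  move=> w; apply/andP/forallP => [[/forallP A B] i|A].
    rewrite /c; case: ltnP => [//|ti]; case: ltnP => ik.
      by have /implyP := A i; apply; rewrite ti ik.
    have -> // : i = ord_max.
    by apply: val_inj; apply/eqP; rewrite eqn_leq ik -ltnS ltn_ord.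
  split; last by have := A ord_max; rewrite /c /= ltnNge leq_addr /= ltnn.
  apply/forallP => i; apply/implyP => /andP[ti ik].
  by have := A i; rewrite /c ltnNge ti ik.
have step i : \sum_(j | c i j) q j = if (i < t)%N then 1
    else if (i < t + k)%N then 1 - detect_prob e else detect_prob e.
  by rewrite /c; case: ifP => _; [exact: memoryless_sum1|case: ifP => _; [exact: miss_prob|]].
rewrite sum_pr_memoryless; under eq_bigr do rewrite step.
rewrite big_ord_recr /= ltnNge leq_addr ltnn /= mulrC; congr (_ * _).
rewrite (eq_bigr (fun i : 'I_(t + k) => if (i < t)%N then 1 else 1 - detect_prob e)); last first.
  by move=> i _; rewrite ltn_ord.
rewrite -(big_mkord xpredT (fun i => if (i < t)%N then 1 else 1 - detect_prob e)).
rewrite (big_cat_nat _ (leq_addr k t)) //= big1_seq ?mul1r; last first.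
  by move=> i /andP[_]; rewrite mem_index_iota => /andP[_ ->].
rewrite (eq_big_seq (fun _ => 1 - detect_prob e)); last first.
  by move=> i; rewrite mem_index_iota => /andP[ti _]; rewrite ltnNge ti.
by rewrite prodr_const_nat addKn.
Qed.

Lemma T_det_memoryless e t : T_det s sc e t = T_det s sc e 0.
Proof.
have E : P_first s sc e t = P_first s sc e 0.
  by apply/funext => k; rewrite !P_first_memoryless.
by rewrite /T_det E.
Qed.

Lemma P_first_memoryless_geometric e t :
  P_first s sc e t = fun k => (1 - (1 - detect_prob e)) * (1 - detect_prob e) ^+ k.
Proof. by apply/funext => k; rewrite P_first_memoryless subKr. Qed.

Lemma miss_prob_ge0_lt1 e : 0 < detect_prob e -> 0 <= 1 - detect_prob e < 1.
Proof. by move=> p0; rewrite subr_ge0 detect_prob_le1 /= gtrBl. Qed.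

Lemma detect_prob_gt0 e B : (T_det s sc e 0 <= B%:E)%E -> 0 < detect_prob e.
Proof.
move=> /T_det_bounded [P_sum1 _].
rewrite lt_def detect_prob_ge0 andbT; apply/eqP => p0; move: P_sum1.
rewrite eseries0 => [h|k _ _]; last by rewrite P_first_memoryless p0 mul0r.
by have := congr1 fine h => /= /eqP; rewrite eq_sym oner_eq0.
Qed.

Lemma inv_detect_prob_le_Treal e B : (T_det s sc e 0 <= B%:E)%E ->
  (detect_prob e)^-1 <= Treal s sc e 0.
Proof.
move=> HB; have z01 := miss_prob_ge0_lt1 (detect_prob_gt0 HB).
have hc := survival_sum_geometric_cvg z01.
rewrite -(P_first_memoryless_geometric e 0) subKr in hc.
rewrite -(cvg_lim _ hc) //; apply: limr_le; first by apply/cvg_ex; eexists; exact: hc.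
by apply: nearW => K; have := survival_sum_le_Treal sc_stoch HB K.
Qed.

Lemma T_det_memoryless_le e : 0 < detect_prob e ->
  (T_det s sc e 0 <= ((detect_prob e)^-1)%:E)%E.
Proof.
move=> p0; have z01 := miss_prob_ge0_lt1 p0.
rewrite /T_det P_first_memoryless_geometric geometric_law_sum1 // eqxx.
rewrite -{3}(subKr 1 (detect_prob e)).
apply: mean_le_survival_bound => [k||K].
- by case/andP: z01 => z0 _; rewrite mulr_ge0 ?exprn_ge0 // subKr detect_prob_ge0.
- exact: geometric_law_sum1.
- exact: survival_sum_geometric_le.
Qed.

Lemma memoryless_stationary B : (forall e, (T_det s sc e 0 <= B%:E)%E) ->
  forall e t, T_det s sc e t = (Treal s sc e 0)%:E.
Proof. by move=> HB e t; rewrite T_det_memoryless (Treal_bounded sc_stoch (HB e)). Qed.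

Lemma memoryless_valid_Et_le : (forall e, 0 < detect_prob e) ->
  valid s sc /\ forall e, Et s sc e <= (detect_prob e)^-1.
Proof.
move=> p_gt0.
have HB e : (T_det s sc e 0 <= (\big[Num.max/0]_e' (detect_prob e')^-1)%:E)%E.
  by apply: le_trans (T_det_memoryless_le (p_gt0 e)) _; rewrite lee_fin le_bigmax.
split; first exact: valid_stationary sc_stoch (memoryless_stationary HB) P_test_memoryless.
move=> e; rewrite (Et_stationary (memoryless_stationary HB)) -lee_fin.
by rewrite (Treal_bounded sc_stoch (HB e)) T_det_memoryless_le.
Qed.

End Memoryless.

Section Arithmetic.
Variable R : realType.

Lemma sum_ord_succ M : \sum_(k < M) (k.+1)%:R = M%:R * M.+1%:R / 2 :> R.
Proof.
elim: M => [|M IH]; first by rewrite big_ord0 mul0r mul0r.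
by rewrite big_ord_recr /= IH -!natr1; field.
Qed.

Lemma mean_ord_succ N : N.+1%:R^-1 * \sum_(k < N.+1) (k.+1)%:R = N.+2%:R / 2 :> R.
Proof. by rewrite sum_ord_succ; field; rewrite addrC natr1 pnatr_eq0. Qed.

Lemma sum_ord_rev M : \sum_(i < M) (M%:R - i%:R) = \sum_(k < M) (k.+1)%:R :> R.
Proof.
rewrite (reindex_inj rev_ord_inj) /=; apply: eq_bigr => i _.
by rewrite natrB //; lra.
Qed.

End Arithmetic.

Definition singletons N : 'I_N -> {set 'I_N} := fun i => [set i].
Arguments singletons : clear implicits.

Section SingletonsLowerBound.
Variables (R : realType) (N : nat) (sc : schedule R N).
Hypothesis sc_stoch : is_stochastic sc.
Local Notation s := (singletons N).

Lemma sum_P_first_singletons_le1 t j : \sum_(e : 'I_N) P_first s sc e t j <= 1.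
Proof.
rewrite /P_first; under eq_bigr do rewrite big_mkcond.
rewrite exchange_big /= -(sum_pr_from sc_stoch (t + j).+1 [::]).
apply: ler_sum => w _.
rewrite (bigD1 (tnth w ord_max)) //= big1 ?addr0.
  by case: ifP => _ //; exact: pr_from_ge0.
by move=> e /negbTE ne; case: ifP => // /andP[_]; rewrite /singletons finset.in_set1 ne.
Qed.

Lemma sum_Treal_singletons_ge B : (forall e t, (T_det s sc e t <= B%:E)%E) ->
  forall t, \sum_(i < N) (N%:R - i%:R) <= \sum_(e : 'I_N) Treal s sc e t.
Proof.
move=> HB t.
apply: (@le_trans _ _ (\sum_(e : 'I_N) survival_sum (P_first s sc e t) N)); last first.
  by apply: ler_sum => e _; exact: survival_sum_le_Treal.
rewrite /survival_sum exchange_big /=; apply: ler_sum => i _.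
rewrite sumrB sumr_const card_ord lerD2l lerN2 exchange_big /=.
apply: (@le_trans _ _ (\sum_(j < i) 1)); first by apply: ler_sum => j _; exact: sum_P_first_singletons_le1.
by rewrite sumr_const card_ord.
Qed.

End SingletonsLowerBound.

Lemma obj_SUM_singletons_ge (R : realType) N (sc : schedule R N.+1) :
  valid (singletons N.+1) sc -> N.+2%:R / 2 <= obj_SUM (singletons N.+1) sc.
Proof.
move=> [Hs [B HB] Hc _].
set g := fun H => \sum_(e : 'I_N.+1) N.+1%:R^-1 * Defs.cesaro (Treal (singletons N.+1) sc e) H.
have gc : (g @ \oo --> obj_SUM (singletons N.+1) sc)%classic.
  apply: (@cvg_big _ _ +%R 0 xpredT add_continuous) => e _.
  by apply: cvgMl_tmp; exact: Hc.
rewrite -(cvg_lim _ gc) //.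
apply: limr_ge; first by apply/cvg_ex; exists (obj_SUM (singletons N.+1) sc).
apply: nearW => H.
rewrite /g /Defs.cesaro -mean_ord_succ -sum_ord_rev -mulr_sumr.
rewrite ler_wpM2l ?invr_ge0 // -mulr_suml exchange_big /= ler_pdivlMr ?ltr0Sn //.
apply: (@le_trans _ _ (\sum_(t < H.+1) \sum_(i < N.+1) (N.+1%:R - i%:R))).
  by rewrite sumr_const card_ord mulr_natr.
by apply: ler_sum => t _; exact: (sum_Treal_singletons_ge Hs HB t).
Qed.

Section RoundRobin.
Variables (R : realType) (N : nat).
Local Notation s := (singletons N.+1).

Definition round_robin : schedule R N.+1 := fun h j =>
  match h with
  | [::] => N.+1%:R^-1
  | x :: h' => (nat_of_bool (val j == (val (last x h')).+1 %% N.+1)%N)%:R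
  end.

Lemma round_robin_stochastic : is_stochastic round_robin.
Proof.
split; first by case=> [|x h] j //=; rewrite ?invr_ge0 ler0n.
case=> [|x h] /=.
  by rewrite sumr_const card_ord -[_ *+ N.+1]mulr_natr mulVf // pnatr_eq0.
have lt : ((val (last x h)).+1 %% N.+1 < N.+1)%N by rewrite ltn_mod.
rewrite (bigD1 (Ordinal lt)) //= eqxx big1 ?addr0 // => j nj.
by case: eqP => // ej; case/eqP: nj; apply: val_inj.
Qed.

Definition cycle_after (a L : nat) := map (fun i => (a + i) %% N.+1)%N (iota 1 L).

Lemma pr_from_round_robin x h w : pr_from round_robin (x :: h) w =
  (nat_of_bool (map val w == cycle_after (last x h) (size w)))%:R.
Proof.
elim: w x h => [|j w IH] x h //=.
rewrite -rcons_cons IH last_rcons /cycle_after /= eqseq_cons.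
rewrite addn1; case: eqP => [ej|_] /=; last by rewrite mul0r.
rewrite mul1r; congr ((nat_of_bool (_ == _))%:R).
rewrite -[2%N]/(1 + 1)%N iotaDl -map_comp; apply: eq_map => i /=.
by rewrite ej modnDml addnA addn1.
Qed.

Lemma size_cycle_tuple (j : 'I_N.+1) L : size (map (@inord N) (cycle_after j L)) == L.
Proof. by rewrite !size_map size_iota. Qed.

Definition cycle_tuple (j : 'I_N.+1) L : L.-tuple 'I_N.+1 := Tuple (size_cycle_tuple j L).

Lemma map_val_cycle_tuple j L : map val (cycle_tuple j L) = cycle_after j L.
Proof.
rewrite /= -map_comp -[RHS]map_id; apply/eq_in_map => x /mapP[i _ ->] /=.
by rewrite inordK // ltn_mod.
Qed.

Lemma tnth_cycle_tuple j L (i : 'I_L.+1) :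
  val (tnth [tuple of j :: cycle_tuple j L] i) = ((j + i) %% N.+1)%N.
Proof.
rewrite (tnth_nth j) /=; case: i => [[|i] /= hi].
  by rewrite addn0 modn_small.
rewrite (nth_map 0%N); last by rewrite size_map size_iota.
by rewrite /cycle_after (nth_map 0%N) ?size_iota // nth_iota // inordK ?ltn_mod // add1n.
Qed.

Lemma sum_pr_round_robin L (b : pred (L.+1.-tuple 'I_N.+1)) :
  \sum_(w : L.+1.-tuple 'I_N.+1 | b w) pr round_robin w
  = N.+1%:R^-1 * \sum_(j : 'I_N.+1) (nat_of_bool (b [tuple of j :: cycle_tuple j L]))%:R.
Proof.
rewrite big_mkcond sum_tuple_cons mulr_sumr; apply: eq_bigr => j _ /=.
have pr_cons (w : L.-tuple 'I_N.+1) : pr round_robin [tuple of j :: w] =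
    N.+1%:R^-1 * (nat_of_bool (map val w == cycle_after j L))%:R.
  by rewrite /pr /= pr_from_round_robin /= size_tuple.
rewrite (bigD1 (cycle_tuple j L)) //= big1 ?addr0.
  by rewrite pr_cons map_val_cycle_tuple eqxx mulr1; case: ifP; rewrite ?mulr0 ?mulr1.
move=> w nw; case: ifP => // _; rewrite pr_cons.
case: eqP => [hw|]; last by rewrite mulr0.
by case/eqP: nw; apply: val_inj; apply: (inj_map val_inj); rewrite hw map_val_cycle_tuple.
Qed.

Lemma sum_shift_mod_eq (x e : nat) : (e < N.+1)%N ->
  \sum_(j : 'I_N.+1) (nat_of_bool ((j + x) %% N.+1 == e)%N)%:R = 1 :> R.
Proof.
move=> eN.
set r := ((e + N.+1 - x %% N.+1) %% N.+1)%N.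
have rN : (r < N.+1)%N by rewrite ltn_mod.
have hr : ((r + x) %% N.+1 = e)%N.
  rewrite /r modnDml -modnDmr subnK; last first.
    by apply: leq_trans (ltnW (ltn_pmod _ _)) (leq_addl _ _).
  by rewrite modnDr modn_small.
rewrite (bigD1 (Ordinal rN)) //= hr eqxx big1 ?addr0 // => j nj.
case: eqP => // hj; case/eqP: nj; apply: val_inj => /=.
have : (j + x == r + x %[mod N.+1])%N by rewrite hj hr.
by rewrite eqn_modDr !modn_small // => /eqP.
Qed.

(* Starting from j, the cycle reaches e after a delay in [0, N] determined
  by j; the delay is k for exactly one start j when k <= N. *)
Lemma sum_first_hit_shift (t k e : nat) : (e < N.+1)%N ->
  \sum_(j : 'I_N.+1) (nat_of_bool
     ([forall i : 'I_(t + k).+1, ((t <= i < t + k) ==> ((j + i) %% N.+1 != e))]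
      && ((j + (t + k)) %% N.+1 == e)))%N%:R
  = (nat_of_bool (k < N.+1)%N)%:R :> R.
Proof.
move=> eN; case: (ltnP k N.+1) => hk.
  transitivity (\sum_(j : 'I_N.+1) (nat_of_bool ((j + (t + k)) %% N.+1 == e)%N)%:R : R).
    apply: eq_bigr => j _.
    case H: ((j + (t + k)) %% N.+1 == e)%N; rewrite ?andbF ?andbT //.
    rewrite (_ : [forall i : 'I_(t + k).+1, _] = true) //.
    apply/forallP => i; apply/implyP => /andP[ti ik]; apply/negP => /eqP hi.
    have : (j + i == j + (t + k) %[mod N.+1])%N by rewrite hi (eqP H).
    rewrite eqn_modDl eq_sym eqn_mod_dvd; last by lia.
    move=> /dvdn_leq; lia.
  by rewrite sum_shift_mod_eq // hk.
rewrite big1 // => j _.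
case H: ((j + (t + k)) %% N.+1 == e)%N; rewrite ?andbF ?andbT //.
have lt : (t + k - N.+1 < (t + k).+1)%N by lia.
case: forallP => // /(_ (Ordinal lt)) /implyP /= h.
have /h : (t <= t + k - N.+1 < t + k)%N by lia.
suff -> : ((j + (t + k - N.+1)) %% N.+1 = (j + (t + k)) %% N.+1)%N by rewrite H.
by rewrite -(modnDr (j + (t + k - N.+1))) -addnA subnK //; lia.
Qed.

Lemma P_first_round_robin (e : 'I_N.+1) t k :
  P_first s round_robin e t k = N.+1%:R^-1 * (nat_of_bool (k < N.+1)%N)%:R.
Proof.
rewrite /P_first sum_pr_round_robin -(sum_first_hit_shift t k (ltn_ord e)).
congr (_ * _); apply: eq_bigr => j _.
rewrite /singletons finset.in_set1 -(inj_eq val_inj) tnth_cycle_tuple (eq_sym (val e)).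
congr ((nat_of_bool (_ && _))%:R); apply: eq_forallb => i.
by rewrite finset.in_set1 -(inj_eq val_inj) tnth_cycle_tuple (eq_sym (val e)).
Qed.

Lemma P_test_round_robin i t : P_test round_robin i t = N.+1%:R^-1.
Proof.
rewrite /P_test sum_pr_round_robin -[X in _ = X]mulr1; congr (_ * _).
apply: eq_trans (sum_shift_mod_eq t (ltn_ord i)); apply: eq_bigr => j _.
by rewrite -(inj_eq val_inj) tnth_cycle_tuple.
Qed.

Lemma T_det_round_robin e t : T_det s round_robin e t = (N.+2%:R / 2)%:E.
Proof.
have P_ge0 k : 0 <= P_first s round_robin e t k.
  by rewrite P_first_round_robin mulr_ge0 ?invr_ge0.
have P_late k : (N.+1 <= k)%N -> P_first s round_robin e t k = 0.
  by move=> kN; rewrite P_first_round_robin ltnNge kN mulr0.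
have P_early (k : 'I_N.+1) : P_first s round_robin e t k = N.+1%:R^-1.
  by rewrite P_first_round_robin ltn_ord mulr1.
rewrite /T_det (nneseries_eventually0 P_ge0 P_late) (eq_bigr _ (fun k _ => P_early k)).
rewrite sumr_const card_ord -[_ *+ N.+1]mulr_natr mulVf ?pnatr_eq0 // eqxx.
rewrite (@nneseries_eventually0 _ _ N.+1) => [|k|k kN]; last by rewrite P_late ?mulr0.
  rewrite -mean_ord_succ mulr_sumr; congr _%:E.
  by apply: eq_bigr => k _; rewrite P_early mulrC.
by rewrite mulr_ge0.
Qed.

Lemma round_robin_valid : valid s round_robin.
Proof.
exact: valid_stationary round_robin_stochastic T_det_round_robin P_test_round_robin.
Qed.

Lemma Et_round_robin e : Et s round_robin e = N.+2%:R / 2.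
Proof. exact: Et_stationary T_det_round_robin e. Qed.

End RoundRobin.

Section MemorylessSingletons.
Variables (R : realType) (N : nat).
Local Notation s := (singletons N.+1).

Lemma detect_prob_singletons (q : 'I_N.+1 -> R) e : detect_prob s q e = q e.
Proof.
rewrite /detect_prob (big_pred1 e) // => j /=.
by rewrite /singletons finset.in_set1 eq_sym.
Qed.

Lemma obj_SUM_memoryless_singletons_ge (sc : schedule R N.+1) :
  valid s sc -> memoryless sc -> N.+1%:R <= obj_SUM s sc.
Proof.
move=> [Hs [B HB] _ _] [q sc_q].
have HB0 e : (T_det s sc e 0 <= B%:E)%E := HB e 0.
have q_inv_le e : 0 < q e /\ (q e)^-1 <= Et s sc e.
  rewrite (Et_stationary (memoryless_stationary sc_q Hs HB0)) -(detect_prob_singletons q e).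
  split; [by have := detect_prob_gt0 sc_q Hs (HB0 e)|].
  by have := inv_detect_prob_le_Treal sc_q Hs (HB0 e).
set n := N.+1%:R; have n0 : 0 < n by rewrite ltr0n.
apply: (@le_trans _ _ (\sum_(e : 'I_N.+1) n^-1 * (2 * n - n ^+ 2 * q e))); last first.
  apply: ler_sum => e _; apply: ler_wpM2l; first by rewrite invr_ge0 ltW.
  have [qe0 hq] := q_inv_le e; apply: le_trans hq.
  (* 1/x >= 2n - n^2 x is the tangent line of the convex map x |-> 1/x at 1/n *)
  rewrite -[(q e)^-1]div1r ler_pdivlMr //.
  have : 0 <= (n * q e - 1) ^+ 2 by exact: sqr_ge0.
  lra.
rewrite -mulr_sumr sumrB sumr_const card_ord -mulr_sumr (memoryless_sum1 sc_q Hs) mulr1.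
rewrite -[_ *+ N.+1]mulr_natr -/n expr2 (_ : 2 * n * n - n * n = n * n); last by ring.
by rewrite mulrA mulVf ?gt_eqF // mul1r.
Qed.

Definition uniform_schedule : schedule R N.+1 := fun _ _ => N.+1%:R^-1.

Lemma uniform_schedule_stochastic : is_stochastic uniform_schedule.
Proof.
split => [h j|h]; first by rewrite /uniform_schedule invr_ge0.
by rewrite sumr_const card_ord -[_ *+ N.+1]mulr_natr mulVf // pnatr_eq0.
Qed.

Lemma uniform_schedule_valid_Et_le :
  valid s uniform_schedule /\ forall e, Et s uniform_schedule e <= N.+1%:R.
Proof.
have [|Hv HEt] := @memoryless_valid_Et_le R N.+1 N.+1 s (fun=> N.+1%:R^-1)
  uniform_schedule (fun=> erefl) uniform_schedule_stochastic.
  by move=> e; rewrite detect_prob_singletons invr_gt0 ltr0n.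
by split => // e; rewrite -[N.+1%:R]invrK -(detect_prob_singletons (fun=> N.+1%:R^-1) e).
Qed.

End MemorylessSingletons.

Section OptimalValues.
Variables (R : realType) (N : nat).
Local Notation s := (singletons N.+1).
Local Open Scope classical_set_scope.

Lemma opt_singletons :
  opt_SUM R s = (N.+2%:R / 2)%:E /\ opt_MAX R s = (N.+2%:R / 2)%:E.
Proof.
have [||| oSUM oMAX] := @ereal_inf_objs R N.+1 N.+1 s (ltn0Sn N)
  [set sc | valid s sc] (N.+2%:R / 2) (@round_robin R N).
- exact: round_robin_valid.
- by apply: bigmax_le => [|e _]; rewrite ?Et_round_robin // divr_ge0.
- by move=> sc; exact: obj_SUM_singletons_ge.
- by split.
Qed.

Lemma optM_singletons : optM_SUM R s = N.+1%:R%:E /\ optM_MAX R s = N.+1%:R%:E.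
Proof.
have [Hv HEt] := @uniform_schedule_valid_Et_le R N.
have [||| oSUM oMAX] := @ereal_inf_objs R N.+1 N.+1 s (ltn0Sn N)
  [set sc | valid s sc /\ memoryless sc] N.+1%:R (@uniform_schedule R N).
- by split => //; exists (fun=> N.+1%:R^-1).
- exact: bigmax_le.
- by move=> sc []; exact: obj_SUM_memoryless_singletons_ge.
- by split.
Qed.

End OptimalValues.

Theorem lemma6 (R : realType) (eps : R) : 0 < eps ->
  exists (n m : nat) (s : 'I_m -> {set 'I_n}),
    [/\ (0 < n)%N,
        (forall e : 'I_n, exists i : 'I_m, e \in s i),
        optM_MAX R s = optM_SUM R s,
        ((2 - eps)%:E * opt_MAX R s <= optM_SUM R s)%E &
        ((2 - eps)%:E * opt_MAX R s = (2 - eps)%:E * opt_SUM R s)%E].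
Proof.
move=> eps_gt0.
have [N hN] : exists N, 2 / eps < N%:R.
  by exists (Num.Def.archi_bound (2 / eps)); apply: archi_boundP; rewrite divr_ge0 // ltW.
exists N.+1, N.+1, (singletons N.+1).
have [oSUM oMAX] := @opt_singletons R N; have [mSUM mMAX] := @optM_singletons R N.
split => //.
- by move=> e; exists e; rewrite /singletons finset.in_set1.
- by rewrite mMAX mSUM.
- rewrite oMAX mSUM -EFinM lee_fin.
  have : 2 < eps * N%:R by rewrite mulrC -ltr_pdivrMr.
  rewrite -[N.+2]addn2 -[N.+1]addn1 !natrD; nra.
- by rewrite oMAX oSUM.
Qed.
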